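(* Let $G$ be a finite connected $k$-regular simple graph on $n\ge 2$ vertices. Then $$h(G) < k\,\lambda(G)\sqrt{\frac{n}{\lfloor n/2\rfloor}}.$$
   Context: For a finite simple connected graph $G=(V,E)$ on $n$ vertices, the expansion constant is $h(G)=\min\{|\partial F|/|F| : F\subset V,\ 0<|F|\le n/2\}$, where $\partial F$ is the set of edges joining a vertex of $F$ to a vertex of $V\setminus F$. An $L(2,1)$-colouring of $G$ is a map $f:V\to\mathbb{Z}_{\ge 0}$ with $|f(u)-f(v)|\ge 2$ whenever $u,v$ are adjacent and $|f(u)-f(v)|\ge 1$ whenever $u,v$ are at distance two. Its span is $\max f-\min f$, and $\lambda(G)$ denotes the minimum span over all $L(2,1)$-colourings of $G$. *)

From mathcomp Require Import all_boot all_order all_algebra.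
Set Implicit Arguments. Unset Strict Implicit. Unset Printing Implicit Defensive.
Import Order.TTheory GRing.Theory Num.Theory.

Definition simple_graph (T : finType) (e : rel T) : Prop :=
  symmetric e /\ irreflexive e.

Definition connected_graph (T : finType) (e : rel T) : Prop :=
  forall x y : T, connect e x y.

Definition regular (T : finType) (e : rel T) (k : nat) : Prop :=
  forall x : T, #|[set y | e x y]| = k.

(* |boundary F| : number of edges with one end in F and the other outside;
   each such edge is counted once as the ordered pair (inside, outside). *)
Definition boundary_size (T : finType) (e : rel T) (F : {set T}) : nat :=
  #|[set p : T * T | [&& p.1 \in F, p.2 \notin F & e p.1 p.2]]|.

Definition expansion_ratio (R : numFieldType) (T : finType) (e : rel T)
  (F : {set T}) : R :=
  ((boundary_size e F)%:R / #|F|%:R)%R.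

(* The neutral element
   (#|T|^2 + 1) is >= every ratio (|dF| <= #|T|^2, |F| >= 1), so it never
   affects the minimum as soon as an admissible F exists (n >= 2). *)
Definition expansion (R : realFieldType) (T : finType) (e : rel T) : R :=
  \big[Order.min/((#|T| ^ 2).+1)%:R%R]_(F : {set T} | (0 < #|F|) && (#|F| <= #|T| %/ 2))
    expansion_ratio R e F.

Definition dist2 (T : finType) (e : rel T) (u v : T) : bool :=
  [&& u != v, ~~ e u v & [exists w, e u w && e w v]].

Definition L21_colouring (T : finType) (e : rel T) (f : T -> nat) : Prop :=
  (forall u v, e u v -> (2 <= absz ((f u)%:Z - (f v)%:Z)%R)%N) /\
  (forall u v, dist2 e u v -> (1 <= absz ((f u)%:Z - (f v)%:Z)%R)%N).

Definition span (T : finType) (f : T -> nat) : nat :=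
  \max_(x : T) f x - \big[minn/(\max_(y : T) f y)]_(x : T) f x.

Definition is_lambda (T : finType) (e : rel T) (l : nat) : Prop :=
  (exists f : T -> nat, L21_colouring e f /\ span f = l) /\
  (forall f : T -> nat, L21_colouring e f -> l <= span f).

(* Taking F a single vertex shows h(G) <= k.  A connected graph on at least
   two vertices has an edge, so k >= 1 and two adjacent colours differ by at
   least 2, i.e. lambda(G) >= 2.  Finally n / floor(n/2) >= 1, hence
   h(G) <= k < k lambda(G) <= k lambda(G) sqrt(n / floor(n/2)). *)
From mathcomp Require Import all_boot all_order ssralg ssrnum ssrint.
Import Order.TTheory GRing.Theory Num.Theory.

Set Implicit Arguments.
Unset Strict Implicit.
Unset Printing Implicit Defensive.
Local Open Scope ring_scope.

Section Graph.

Variables (T : finType) (e : rel T).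

Lemma connected_has_edge (x y : T) :
  connected_graph e -> x != y -> exists z, e x z.
Proof.
move=> conn; have /connectP [[|z p] /= path_xy ->] := conn x y.
  by rewrite eqxx.
by exists z; case/andP: path_xy.
Qed.

Lemma connected_has_edge_card2 :
  connected_graph e -> (1 < #|T|)%N -> exists x z, e x z.
Proof.
rewrite -cardsT => conn /card_gt1P [x [y [_ _ xy]]].
by have [z exz] := connected_has_edge conn xy; exists x, z.
Qed.

Lemma boundary_size_set1 (x : T) :
  (boundary_size e [set x] <= #|[set y | e x y]|)%N.
Proof.
apply: leq_trans (leq_imset_card (fun y => (x, y)) _).
apply: subset_leq_card; apply/subsetP => -[a b].
rewrite !inE /= => /and3P [/eqP -> _ exb].
by apply/imsetP; exists b; rewrite ?inE.
Qed.

Lemma expansion_le_ratio (R : realFieldType) (F : {set T}) :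
  (0 < #|F|)%N -> (#|F| <= #|T| %/ 2)%N ->
  expansion R e <= expansion_ratio R e F.
Proof. by move=> F_gt0 F_small; apply: bigmin_le_cond; rewrite F_gt0. Qed.

Lemma expansion_le_degree (R : realFieldType) (k : nat) :
  regular e k -> (1 < #|T|)%N -> expansion R e <= k%:R.
Proof.
move=> reg n_gt1; have /card_gt0P [x _] := ltnW n_gt1.
apply: le_trans (@expansion_le_ratio R [set x] _ _) _; rewrite ?cards1 ?divn_gt0 //.
rewrite /expansion_ratio cards1 divr1 ler_nat -(reg x).
exact: boundary_size_set1.
Qed.

Lemma regular_connected_degree_gt0 (k : nat) :
  regular e k -> connected_graph e -> (1 < #|T|)%N -> (0 < k)%N.
Proof.
move=> reg conn n_gt1; have [x [z exz]] := connected_has_edge_card2 conn n_gt1.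
by rewrite -(reg x); apply/card_gt0P; exists z; rewrite inE.
Qed.

End Graph.

Lemma bigminn_le (T : finType) (M : nat) (f : T -> nat) (u : T) :
  (\big[minn/M]_x f x <= f u)%N.
Proof. by rewrite -minEnat -leEnat bigmin_le. Qed.

Lemma distn_le_span (T : finType) (f : T -> nat) (u v : T) :
  (absz ((f u)%:Z - (f v)%:Z) <= span f)%N.
Proof.
wlog le_uv : u v / (f v <= f u)%N.
  by move=> wlog_uv; case: (leqP (f v) (f u)) => [|/ltnW]; [|rewrite distnC]; apply: wlog_uv.
rewrite distnEl //; apply: leq_sub; [exact: leq_bigmax | exact: bigminn_le].
Qed.

Lemma L21_span_ge2 (T : finType) (e : rel T) (f : T -> nat) (u v : T) :
  L21_colouring e f -> e u v -> (2 <= span f)%N.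
Proof. by move=> [adj _] euv; apply: leq_trans (adj _ _ euv) (distn_le_span f u v). Qed.

Lemma lambda_ge2 (T : finType) (e : rel T) (l : nat) :
  connected_graph e -> (1 < #|T|)%N -> is_lambda e l -> (2 <= l)%N.
Proof.
move=> conn n_gt1 [[f [col <-]] _].
have [u [v euv]] := connected_has_edge_card2 conn n_gt1.
exact: L21_span_ge2 col euv.
Qed.

Lemma sqrt_div_half_ge1 (R : rcfType) (n : nat) :
  (1 < n)%N -> 1 <= Num.sqrt (n%:R / (n %/ 2)%:R : R).
Proof.
move=> n_gt1; have half_gt0 : (0 < n %/ 2)%N by rewrite divn_gt0.
rewrite -[leLHS]sqrtr1 ler_sqrt ?divr_ge0 // ler_pdivlMr ?ltr0n // mul1r ler_nat.
exact: leq_div.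
Qed.

Theorem theorem2p2 (R : rcfType) (T : finType) (e : rel T) (k l : nat) :
  simple_graph e -> connected_graph e -> regular e k ->
  (2 <= #|T|)%N -> is_lambda e l ->
  expansion R e < k%:R * l%:R * Num.sqrt (#|T|%:R / (#|T| %/ 2)%:R).
Proof.
move=> _ conn reg n_ge2 lam.
have k_gt0 := regular_connected_degree_gt0 reg conn n_ge2.
have l_ge2 := lambda_ge2 conn n_ge2 lam.
apply: le_lt_trans (expansion_le_degree R reg n_ge2) _.
apply: lt_le_trans (_ : k%:R * l%:R <= _).
  by rewrite -natrM ltr_nat ltn_Pmulr.
by rewrite ler_peMr ?sqrt_div_half_ge1 // -natrM ler0n.
Qed.
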